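(* There is an absolute constant $c>0$ such that for every $n\ge 1$ and $N=2^n$ there is a 2D SLP with at most $c\cdot n$ nonterminals deriving $\mathsf{ShiftBin}_N$.
   Context: Alphabet $\Sigma\supseteq\{0,1,\$\}$. A 2D string of size $p\times q$ is a $p\times q$ array over $\Sigma$. For $N=2^n$, $\mathsf{Bin}_N$ is the $N\times(n+2)$ 2D string whose $i$-th row ($i\in[1..N]$) is $\$\,b_{i-1}\,\$$, where $b_{i-1}$ is the $n$-bit binary representation of $i-1$. $\mathsf{ShiftBin}_N$ is the $2N\times N(n+2)$ 2D string such that for each $j\in[1..N]$, the subarray formed by rows $j,\dots,j+N-1$ and columns $(j-1)(n+2)+1,\dots,j(n+2)$ equals $\mathsf{Bin}_N$ (i.e., the $j$-th copy of $\mathsf{Bin}_N$ shifted down by $j-1$ rows), and all other entries are $0$. A 2D SLP is a triple $(\mathcal V,\mathcal S,\rho)$: a finite set $\mathcal V$ of nonterminals each with a dimension (height, width), a starting nonterminal $\mathcal S$, and for each $X\in\mathcal V$ a production $\rho(X)$ which is a character $\sigma\in\Sigma$ ($X$ of size $1\times1$), or a horizontal concatenation $Y\oplus_{\mathrm h}Z$ ($Y$ and $Z$ of equal height, $Z$ placed to the right of $Y$), or a vertical concatenation $Y\oplus_{\mathrm v}Z$ ($Y,Z$ of equal width, $Z$ placed below $Y$), with $Y,Z\in\mathcal V$ and the occurrence relation acyclic; it derives the 2D string $\exp(\mathcal S)$ obtained by recursive expansion. *)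

From mathcomp Require Import all_boot.
Set Implicit Arguments. Unset Strict Implicit. Unset Printing Implicit Defensive.

Section TwoD.
Variable T : Type.

(* A 2D string of size h x w over T: (h, w, f) where only the entries
   f i j with i < h, j < w (0-indexed) matter. *)
Definition str2D := (nat * nat * (nat -> nat -> T))%type.

Definition height (s : str2D) : nat := s.1.1.
Definition width (s : str2D) : nat := s.1.2.
Definition entry (s : str2D) : nat -> nat -> T := s.2.

Definition str2D_eq (s t : str2D) : Prop :=
  height s = height t /\ width s = width t /\
  forall i j, i < height s -> j < width s -> entry s i j = entry t i j.

(* Productions of a 2D SLP.  Nonterminals are numbered 0, 1, ... in the
   order of the list; a production of nonterminal k may only refer to
   nonterminals with index < k (this encodes acyclicity). *)
Inductive prod2D :=
  | PChar of T
  | PHor of nat & nat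
  | PVer of nat & nat.

Definition slp2D := seq prod2D.

Definition step2D (acc : seq str2D) (r : prod2D) : option str2D :=
  match r with
  | PChar a => Some (1, 1, fun _ _ => a)
  | PHor y z =>
      match onth acc y, onth acc z with
      | Some sy, Some sz =>
          if height sy == height sz then
            Some (height sy, width sy + width sz,
                  fun i j => if j < width sy then entry sy i j
                             else entry sz i (j - width sy))
          else None
      | _, _ => None
      end
  | PVer y z =>
      match onth acc y, onth acc z with
      | Some sy, Some sz =>
          if width sy == width sz then
            Some (height sy + height sz, width sy,
                  fun i j => if i < height sy then entry sy i j
                             else entry sz (i - height sy) j)
          else None
      | _, _ => None
      end
  end.

Fixpoint evalAll (acc : seq str2D) (g : slp2D) : option (seq str2D) :=
  match g with
  | [::] => Some acc
  | r :: g' =>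
      match step2D acc r with
      | Some s => evalAll (rcons acc s) g'
      | None => None
      end
  end.

Definition slp_derives (g : slp2D) (k : nat) (M : str2D) : Prop :=
  exists es, evalAll [::] g = Some es /\
    exists e, onth es k = Some e /\ str2D_eq e M.

Definition num_nonterminals (g : slp2D) : nat := size g.

Variables (zero one dollar : T).

(* Bin_N for N = 2^n: N x (n+2); row i (0-indexed) is  $ b_i $  where
   b_i is the n-bit binary representation of i, most significant bit first. *)
Definition bin_entry (n i t : nat) : T :=
  if (t == 0) || (t == n.+1) then dollar
  else if odd (i %/ 2 ^ (n - t)) then one else zero.

Definition Bin (n : nat) : str2D := (2 ^ n, n + 2, bin_entry n).

(* ShiftBin_N: 2N x N(n+2); the j-th copy (0-indexed) of Bin_N occupies
   rows j .. j+N-1 and columns j(n+2) .. (j+1)(n+2)-1; all else is 0. *)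
Definition shiftbin_entry (n r c : nat) : T :=
  let j := c %/ (n + 2) in
  let t := c %% (n + 2) in
  if (j <= r) && (r < j + 2 ^ n) then bin_entry n (r - j) t else zero.

Definition ShiftBin (n : nat) : str2D :=
  (2 * 2 ^ n, 2 ^ n * (n + 2), shiftbin_entry n).

End TwoD.

(* ShiftBin_N is produced by repeated doubling, each step costing a constant
   number of productions.  The block of all k-bit binary numbers doubles to the
   (k+1)-bit block by prefixing a column of 0s, resp. 1s, and stacking the two
   halves; flanked by $-columns it gives Bin_N after n steps.  If X_k is the part
   of ShiftBin_N holding its first 2^k copies of Bin_N and Z_k the zero block of
   width 2^k (n+2) and height 2^k, then X_(k+1) is X_k above Z_k, placed left of
   Z_k above X_k, while Z_(k+1) consists of four copies of Z_k; ShiftBin_N = X_n. *)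

From mathcomp Require Import all_boot zify.
Set Implicit Arguments. Unset Strict Implicit. Unset Printing Implicit Defensive.

Section Derivations.
Variable T : Type.
Implicit Types (g : slp2D T) (A B C : str2D T).

Definition hcat A B : str2D T :=
  (height A, width A + width B,
   fun i j => if j < width A then entry A i j else entry B i (j - width A)).

Definition vcat A B : str2D T :=
  (height A + height B, width A,
   fun i j => if i < height A then entry A i j else entry B (i - height A) j).

Definition const2D h w (a : T) : str2D T := (h, w, fun _ _ => a).

Lemma str2D_eq_trans A B C : str2D_eq A B -> str2D_eq B C -> str2D_eq A C.
Proof.
case=> hAB [wAB eAB] [hBC [wBC eBC]]; split; [|split]; rewrite ?hAB ?wAB //.
by move=> i j Hi Hj; rewrite eAB ?hAB ?wAB // eBC.
Qed.

Lemma hcat_eq A A' B B' : str2D_eq A A' -> str2D_eq B B' ->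
  height A = height B -> str2D_eq (hcat A B) (hcat A' B').
Proof.
case: A A' B B' => [[hA wA] fA] [[? ?] fA'] [[hB wB] fB] [[? ?] fB'].
rewrite /str2D_eq /hcat /height /width /entry /= => -[<- [<- eA]] [_ [<- eB]] hAB.
split=> //; split=> // i j Hi Hj; case: ifP => Hj'; first exact: eA.
by apply: eB; lia.
Qed.

Lemma vcat_eq A A' B B' : str2D_eq A A' -> str2D_eq B B' ->
  width A = width B -> str2D_eq (vcat A B) (vcat A' B').
Proof.
case: A A' B B' => [[hA wA] fA] [[? ?] fA'] [[hB wB] fB] [[? ?] fB'].
rewrite /str2D_eq /vcat /height /width /entry /= => -[<- [<- eA]] [<- [_ eB]] wAB.
split=> //; split=> // i j Hi Hj; case: ifP => Hi'; first exact: eA.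
by apply: eB; lia.
Qed.

Lemma evalAll_rcons acc g r es : evalAll acc g = Some es ->
  evalAll acc (rcons g r) = omap (rcons es) (step2D es r).
Proof.
elim: g acc => [|r' g IH] acc /=; first by case=> <-; case: step2D.
by case: step2D => // s /IH.
Qed.

Lemma evalAll_size acc g es : evalAll acc g = Some es -> size es = size acc + size g.
Proof.
elim: g acc => [|r g IH] acc /=; first by case=> <-; rewrite addn0.
by case: step2D => // s /IH ->; rewrite size_rcons addSnnS.
Qed.

Lemma slp_derives_eq g k A B : slp_derives g k A -> str2D_eq A B -> slp_derives g k B.
Proof.
case=> es [He [e [Hk HeA]]] HAB; exists es; split => //.
by exists e; split => //; apply: str2D_eq_trans HeA HAB.
Qed.

Lemma slp_derivesP g es k A : evalAll [::] g = Some es -> slp_derives g k A ->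
  exists2 e, onth es k = Some e & str2D_eq e A.
Proof. by move=> He [es' [He' [e [Hk HeA]]]]; move: He'; rewrite He => -[->]; exists e. Qed.

Lemma slp_derives_rcons g es r s A : evalAll [::] g = Some es -> step2D es r = Some s ->
  str2D_eq s A -> slp_derives (rcons g r) (size g) A.
Proof.
move=> He Hr HsA; exists (rcons es s); split; first by rewrite (evalAll_rcons _ He) Hr.
exists s; split => //.
by rewrite -cats1 onth_cat (evalAll_size He) ltnn subnn.
Qed.

Lemma slp_derives_hor g y z A B : slp_derives g y A -> slp_derives g z B ->
  height A = height B -> slp_derives (rcons g (PHor T y z)) (size g) (hcat A B).
Proof.
move=> Hy Hz hAB; have [es [He _]] := Hy.
have [ey Ey eyA] := slp_derivesP He Hy; have [ez Ez ezB] := slp_derivesP He Hz.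
have hyz : height ey = height ez by rewrite (proj1 eyA) (proj1 ezB).
apply: (slp_derives_rcons (s := hcat ey ez) He); last exact: hcat_eq.
by rewrite /= Ey Ez ifT //; apply/eqP.
Qed.

Lemma slp_derives_ver g y z A B : slp_derives g y A -> slp_derives g z B ->
  width A = width B -> slp_derives (rcons g (PVer T y z)) (size g) (vcat A B).
Proof.
move=> Hy Hz wAB; have [es [He _]] := Hy.
have [ey Ey eyA] := slp_derivesP He Hy; have [ez Ez ezB] := slp_derivesP He Hz.
have wyz : width ey = width ez by rewrite (proj1 (proj2 eyA)) (proj1 (proj2 ezB)).
apply: (slp_derives_rcons (s := vcat ey ez) He); last exact: vcat_eq.
by rewrite /= Ey Ez ifT //; apply/eqP.
Qed.

Definition extends g g' := forall k A, slp_derives g k A -> slp_derives g' k A.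

Lemma extends_rcons g r k A : slp_derives (rcons g r) k A -> extends g (rcons g r).
Proof.
case=> es' [He' _] k' B [es [He [e [Hk eB]]]]; exists es'; split => //.
move: He'; rewrite (evalAll_rcons _ He); case: step2D => //= s [<-].
by exists e; rewrite -cats1 onth_cat -onthTE Hk.
Qed.

Definition grows c g g' := extends g g' /\ size g' <= size g + c.

Lemma grows_refl g : grows 0 g g.
Proof. by split => //; rewrite addn0. Qed.

Lemma grows_trans a b g1 g2 g3 : grows a g1 g2 -> grows b g2 g3 -> grows (a + b) g1 g3.
Proof. by case=> E12 S12 [E23 S23]; split => [k A /E12 /E23 //|]; lia. Qed.

Lemma grows_le a b g g' : a <= b -> grows a g g' -> grows b g g'.
Proof. by move=> ab [E S]; split => //; lia. Qed.

Lemma grows_rcons c g0 g r k A :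
  grows c g0 g -> slp_derives (rcons g r) k A -> grows c.+1 g0 (rcons g r).
Proof.
move=> [E S] /extends_rcons Er; split => [k' B /E /Er //|].
by rewrite size_rcons; lia.
Qed.

Lemma grows_iter (P : nat -> slp2D T -> Prop) c :
    (forall k g, P k g -> exists2 g', grows c g g' & P k.+1 g') ->
  forall k g, P 0 g -> exists2 g', grows (c * k) g g' & P k g'.
Proof.
move=> step; elim=> [|k IH] g P0; first by exists g; rewrite ?muln0 //; exact: grows_refl.
have [g1 G1 P1] := IH g P0; have [g2 G2 P2] := step _ _ P1.
by exists g2 => //; rewrite mulnS addnC; apply: grows_trans G1 G2.
Qed.

End Derivations.

Ltac lift E := repeat match goal with
  | F : slp_derives ?g _ _ |- _ =>
      match type of E with extends g _ => move: (E _ _ F) => {}F end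
  end.

Ltac grow G H :=
  let E := fresh in
  have E := extends_rcons H; lift E; move: (grows_rcons G H) => {E}{}G.

Section Pictures.
Variables (T : Type) (zero one dollar : T).

Lemma hcat_const h w1 w2 w (a : T) : w1 + w2 = w ->
  str2D_eq (hcat (const2D h w1 a) (const2D h w2 a)) (const2D h w a).
Proof. by move=> <-; split=> //; split=> //= i j _ _; case: ifP. Qed.

Lemma vcat_const h1 h2 h w (a : T) : h1 + h2 = h ->
  str2D_eq (vcat (const2D h1 w a) (const2D h2 w a)) (const2D h w a).
Proof. by move=> <-; split=> //; split=> //= i j _ _; case: ifP. Qed.

(* Row [i] of [bits k] is the [k]-bit binary representation of [i]. *)
Definition bits k : str2D T :=
  (2 ^ k, k, fun i t => if odd (i %/ 2 ^ (k - t.+1)) then one else zero).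

Lemma bits1 : str2D_eq (vcat (const2D 1 1 zero) (const2D 1 1 one)) (bits 1).
Proof.
split=> //; split=> //= i j Hi Hj.
by rewrite /entry /=; case: i Hi => [|[|i]] //= _; case: j Hj.
Qed.

Lemma bitsS k :
  str2D_eq (vcat (hcat (const2D (2 ^ k) 1 zero) (bits k))
                 (hcat (const2D (2 ^ k) 1 one) (bits k)))
           (bits k.+1).
Proof.
rewrite /str2D_eq /vcat /hcat /const2D /bits /height /width /entry /=.
split; first by rewrite expnS; lia.
split=> // i t Hi Ht.
have Hk : 0 < 2 ^ k by rewrite expn_gt0.
case: ifP => Hil; case: ifP => Ht0.
- have -> : t = 0 by lia.
  by rewrite subn1 /= divn_small.
- by have -> : k.+1 - t.+1 = k - (t - 1).+1 by lia.
- have -> : t = 0 by lia.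
  rewrite subn1 /=.
  have -> : i = 1 * 2 ^ k + (i - 2 ^ k) by lia.
  by rewrite divnMDl // divn_small //; move: Hi; lia.
- have E : 2 ^ k = 2 ^ t * 2 ^ (k - t) by rewrite -expnD; congr (2 ^ _); lia.
  have -> : k.+1 - t.+1 = k - t by lia.
  have -> : k - (t - 1).+1 = k - t by lia.
  have -> : i = 2 ^ t * 2 ^ (k - t) + (i - 2 ^ k) by lia.
  rewrite divnMDl ?expn_gt0 // oddD oddX.
  have -> : (t == 0) = false by lia.
  by have -> : 2 ^ t * 2 ^ (k - t) + (i - 2 ^ k) - 2 ^ k = i - 2 ^ k by lia.
Qed.

Lemma Bin_bits n :
  str2D_eq (hcat (hcat (const2D (2 ^ n) 1 dollar) (bits n)) (const2D (2 ^ n) 1 dollar))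
           (Bin zero one dollar n).
Proof.
rewrite /str2D_eq /hcat /const2D /bits /Bin /height /width /entry /=.
split=> //; split=> [|i t Hi Ht]; first lia.
rewrite /bin_entry; case: ifP => H1.
- case: ifP => H2; first by have -> : t = 0 by lia.
  have -> : (t == 0) = false by lia.
  have -> : (t == n.+1) = false by lia.
  by have -> : n - (t - 1).+1 = n - t by lia.
- have -> : t = n.+1 by lia.
  by rewrite eqxx orbT.
Qed.

(* The top-left part of [ShiftBin n] containing its first [2 ^ k] copies of [Bin n]. *)
Definition shiftbin_block n k : str2D T :=
  (2 ^ n + 2 ^ k, 2 ^ k * (n + 2), shiftbin_entry zero one dollar n).

Lemma shiftbin_block0 n :
  str2D_eq (vcat (Bin zero one dollar n) (const2D 1 (n + 2) zero)) (shiftbin_block n 0).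
Proof.
rewrite /str2D_eq /vcat /const2D /Bin /shiftbin_block /height /width /entry /=.
split; first lia; split; first lia.
move=> r c Hr Hc; rewrite /shiftbin_entry divn_small // modn_small // add0n subn0 /=.
by case: ifP.
Qed.

Lemma shiftbin_blockS n k (Z := const2D (2 ^ k) (2 ^ k * (n + 2)) zero) :
  str2D_eq (hcat (vcat (shiftbin_block n k) Z) (vcat Z (shiftbin_block n k)))
           (shiftbin_block n k.+1).
Proof.
rewrite /str2D_eq /vcat /hcat /Z /const2D /shiftbin_block /height /width /entry /=.
split; first by rewrite expnS; lia.
split; first by rewrite expnS; lia.
move=> r c Hr Hc; have Hd : 0 < n + 2 by lia.
rewrite /shiftbin_entry; case: ifP => Hcl.
- case: ifP => Hrl //.
  have : c %/ (n + 2) < 2 ^ k by rewrite ltn_divLR.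
  by case: ifP => // /andP [? ?]; lia.
- case: ifP => Hrl.
  + have : 2 ^ k <= c %/ (n + 2) by rewrite leq_divRL //; lia.
    by case: ifP => // /andP [? ?]; lia.
  + set c' := c - 2 ^ k * (n + 2).
    have -> : c = 2 ^ k * (n + 2) + c' by rewrite /c'; lia.
    rewrite divnMDl // modnMDl; set j := c' %/ (n + 2).
    have -> : (j <= r - 2 ^ k) && (r - 2 ^ k < j + 2 ^ n) =
              (2 ^ k + j <= r) && (r < 2 ^ k + j + 2 ^ n).
      by apply/idP/idP => /andP [? ?]; apply/andP; split; lia.
    by have -> : r - 2 ^ k - j = r - (2 ^ k + j) by lia.
Qed.

Lemma vcat_hcat_const h w h' w' (a : T) : h + h = h' -> w + w = w' ->
  str2D_eq (vcat (hcat (const2D h w a) (const2D h w a)) (hcat (const2D h w a) (const2D h w a)))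
           (const2D h' w' a).
Proof. by move=> <- <-; split=> //; split=> //= i j _ _; case: ifP; case: ifP. Qed.

Lemma shiftbin_block_full n : str2D_eq (shiftbin_block n n) (ShiftBin zero one dollar n).
Proof. by split; [rewrite /height /=; lia | split]. Qed.

End Pictures.

Section Construction.
Variables (T : Type) (zero one dollar : T).
Implicit Types g : slp2D T.

Lemma derives_const_row g z (a : T) m : slp_derives g z (const2D 1 1 a) ->
  exists2 g', grows m g g' & exists k, slp_derives g' k (const2D 1 m.+1 a).
Proof.
move=> Fz.
pose P m g := slp_derives g z (const2D 1 1 a) /\ exists k, slp_derives g k (const2D 1 m.+1 a).
suff [g' G [_ F]] : exists2 g', grows (1 * m) g g' & P m g' by rewrite mul1n in G; exists g'.
apply: grows_iter => [j h [Fz' [k Fk]]|]; last by split=> //; exists z.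
have G := grows_refl h; have H := slp_derives_hor Fk Fz' (erefl 1); grow G H.
eexists; first exact: G.
by split=> //; eexists; apply: slp_derives_eq H _; apply: hcat_const; rewrite addn1.
Qed.

Lemma derives_const_col g x (a : T) m : slp_derives g x (const2D 1 1 a) ->
  exists2 g', grows m g g' & exists y, slp_derives g' y (const2D (2 ^ m) 1 a).
Proof.
move=> Fx; pose P m g := exists y, slp_derives g y (const2D (2 ^ m) 1 a).
suff [g' G F] : exists2 g', grows (1 * m) g g' & P m g' by rewrite mul1n in G; exists g'.
apply: grows_iter => [j h [y Fy]|]; last by exists x.
have G := grows_refl h; have H := slp_derives_ver Fy Fy (erefl 1); grow G H.
eexists; first exact: G.
by eexists; apply: slp_derives_eq H _; apply: vcat_const; rewrite expnS; lia.
Qed.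

Definition bits_stage k g := exists b zc oc,
  [/\ slp_derives g b (bits zero one k.+1), slp_derives g zc (const2D (2 ^ k) 1 zero)
    & slp_derives g oc (const2D (2 ^ k) 1 one)].

Lemma bits_step k g : bits_stage k g -> exists2 g', grows 5 g g' & bits_stage k.+1 g'.
Proof.
move=> [b [zc [oc [Fb Fz Fo]]]]; have G := grows_refl g.
have dbl : 2 ^ k + 2 ^ k = 2 ^ k.+1 by rewrite expnS; lia.
have Z := slp_derives_ver Fz Fz (erefl 1); grow G Z.
have {}Z := slp_derives_eq Z (vcat_const _ _ dbl).
have O := slp_derives_ver Fo Fo (erefl 1); grow G O.
have {}O := slp_derives_eq O (vcat_const _ _ dbl).
have Z0 := slp_derives_hor Z Fb (erefl _); grow G Z0.
have O1 := slp_derives_hor O Fb (erefl _); grow G O1.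
have B := slp_derives_ver Z0 O1 (erefl _); grow G B.
eexists; first exact: G.
by do 3 eexists; split; [exact: slp_derives_eq B (bitsS _ _ _) | exact: Z | exact: O].
Qed.

Lemma derives_Bin g z o d n : 0 < n ->
  slp_derives g z (const2D 1 1 zero) -> slp_derives g o (const2D 1 1 one) ->
  slp_derives g d (const2D 1 1 dollar) ->
  exists2 g', grows (6 * n) g g' & exists b, slp_derives g' b (Bin zero one dollar n).
Proof.
case: n => // m _ Fz Fo Fd.
have [g1 G1 [c Fc]] := derives_const_col m.+1 Fd; lift (proj1 G1).
have B := slp_derives_ver Fz Fo (erefl 1); grow G1 B.
have S0 : bits_stage 0 (rcons g1 (PVer T z o)).
  by exists (size g1), z, o; split=> //; apply: slp_derives_eq B (bits1 _ _).
have [g2 G2 [b [_ [_ [Fb _ _]]]]] := grows_iter bits_step m S0; lift (proj1 G2).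
have H := slp_derives_hor Fc Fb (erefl _); grow G2 H.
have H' := slp_derives_hor H Fc (erefl _); grow G2 H'.
eexists; first by apply: grows_le (grows_trans G1 G2); lia.
by eexists; apply: slp_derives_eq H' (Bin_bits _ _ _ _).
Qed.

Definition shiftbin_stage n k g := exists x z,
  slp_derives g x (shiftbin_block zero one dollar n k) /\
  slp_derives g z (const2D (2 ^ k) (2 ^ k * (n + 2)) zero).

Lemma shiftbin_step n k g :
  shiftbin_stage n k g -> exists2 g', grows 5 g g' & shiftbin_stage n k.+1 g'.
Proof.
move=> [x [z [Fx Fz]]]; have G := grows_refl g.
have L := slp_derives_ver Fx Fz (erefl _); grow G L.
have R := slp_derives_ver Fz Fx (erefl _); grow G R.
have X := slp_derives_hor L R (addnC _ _); grow G X.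
have Z2 := slp_derives_hor Fz Fz (erefl _); grow G Z2.
have Z4 := slp_derives_ver Z2 Z2 (erefl _); grow G Z4.
eexists; first exact: G.
do 2 eexists; split; first exact: slp_derives_eq X (shiftbin_blockS _ _ _ _ _).
by apply: slp_derives_eq Z4 _; apply: vcat_hcat_const; rewrite expnS; nia.
Qed.

Lemma derives_ShiftBin g z b n :
  slp_derives g z (const2D 1 1 zero) -> slp_derives g b (Bin zero one dollar n) ->
  exists2 g', grows (6 * n + 2) g g' & exists k, slp_derives g' k (ShiftBin zero one dollar n).
Proof.
move=> Fz Fb; have [g1 G [r Fr]] := derives_const_row n.+1 Fz; lift (proj1 G).
rewrite -addn2 in Fr.
have X := slp_derives_ver Fb Fr (erefl _); grow G X.
have S0 : shiftbin_stage n 0 (rcons g1 (PVer T b r)).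
  rewrite /shiftbin_stage expn0 mul1n.
  by exists (size g1), r; split=> //; apply: slp_derives_eq X (shiftbin_block0 _ _ _ _).
have [g2 G2 [x [_ [Fx _]]]] := grows_iter (@shiftbin_step n) n S0.
eexists; first by apply: grows_le (grows_trans G G2); lia.
by eexists; apply: slp_derives_eq Fx (shiftbin_block_full _ _ _ _).
Qed.

End Construction.

Theorem mainTheorem5 :
  exists c : nat, 0 < c /\
    forall (T : Type) (zero one dollar : T) (n : nat), 1 <= n ->
      exists (g : slp2D T) (k : nat),
        num_nonterminals g <= c * n /\
        slp_derives g k (ShiftBin zero one dollar n).
Proof.
exists 17; split => // T zero one dollar n Hn.
pose chars := [:: PChar zero; PChar one; PChar dollar].
have [F0 F1 F2] : [/\ slp_derives chars 0 (const2D 1 1 zero),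
    slp_derives chars 1 (const2D 1 1 one) & slp_derives chars 2 (const2D 1 1 dollar)].
  by split; (eexists; split; [reflexivity | eexists; split; [reflexivity | split]]).
have [g1 G1 [b Fb]] := derives_Bin Hn F0 F1 F2; lift (proj1 G1).
have [g2 G2 [k Fk]] := derives_ShiftBin F0 Fb.
exists g2, k; split => //; move: G1.2 G2.2; rewrite /num_nonterminals /=; lia.
Qed.
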